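(* Let $(X,\Sigma)$ be a measurable space, $\mathcal{E}\subseteq\Sigma$ a paving, and $b\in(0,\infty)$. Let $\boldsymbol{\mu}=(\mu_t)_{t\ge0}$ be a family of monotone measures on $\Sigma$ with $\mu_t(X)=\mu_0(X)<\infty$ for all $t\ge0$, and let $\widehat{\boldsymbol{\mu}}=(\widehat{\mu}_t)_{t\ge0}$ be defined by $\widehat{\mu}_t(E)=\mu_0(X)-\mu_{(b-t)_+}(X\setminus E)$ for $t\ge0$, $E\in\Sigma$. Let $\mathscr{A}=\{\mathsf{A}_t(\cdot|E)\colon E\in\mathcal{E},\,t\ge0\}$ be a parametric family of conditional aggregation operators such that $\mathsf{A}_t(b\mathbf{1}_X|E)=b$ for every $t\ge0$ and every $E\in\mathcal{E}\setminus\{\emptyset\}$, and let $\widehat{\mathscr{A}}=\{\widehat{\mathsf{A}}_t(\cdot|E)\colon E\in\mathcal{E},\,t\ge0\}$ be given by $\widehat{\mathsf{A}}_t(f|E)=b-\mathsf{A}_{(b-t)_+}\big((b\mathbf{1}_X-f)_+\,\big|\,E\big)$ for $E\in\mathcal{E}\setminus\{\emptyset\}$ and $\widehat{\mathsf{A}}_t(\cdot|\emptyset)=0$. Then $$\boldsymbol{\mu}_{\mathscr{A}}(f,t)=\mu_0(X)-\widehat{\boldsymbol{\mu}}^S_{\widehat{\mathscr{A}}}(b\mathbf{1}_X-f,\,b-t)$$ for all $t\in[0,b]$ and all $f\in\mathbf{F}$ with $\sup_{x\in X}f(x)\le b$.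
   Context: $a_+=\max\{a,0\}$. $\mathbf{F}$ denotes the set of all $\Sigma$-measurable, nonnegative, bounded functions $f\colon X\to[0,\infty)$. A monotone measure is a map $\mu\colon\Sigma\to[0,\infty]$ with $\mu(B)\le\mu(C)$ whenever $B\subseteq C$, $\mu(\emptyset)=0$ and $\mu(X)>0$. A paving is a family $\mathcal{E}\subseteq\Sigma$ with $\emptyset\in\mathcal{E}$. For $E\in\Sigma\setminus\{\emptyset\}$, a conditional aggregation operator (CAO) w.r.t. $E$ is a map $\mathsf{A}(\cdot|E)\colon\mathbf{F}\to[0,\infty]$ such that (C1) $\mathsf{A}(f|E)\le\mathsf{A}(g|E)$ whenever $f(x)\le g(x)$ for all $x\in E$, and (C2) $\mathsf{A}(\mathbf{1}_{X\setminus E}|E)=0$. In $\mathscr{A}$, each $\mathsf{A}_t(\cdot|E)$ with $E\ne\emptyset$ is a CAO w.r.t. $E$ and $\mathsf{A}_t(\cdot|\emptyset)=\infty$. The generalized level measure is $\boldsymbol{\mu}_{\mathscr{A}}(f,t)=\sup\{\mu_t(E)\colon \mathsf{A}_t(f|E)\ge t,\ E\in\mathcal{E}\}$. The generalized survival function of $g\in\mathbf{F}$ w.r.t. $\widehat{\mathscr{A}}$ and $\widehat{\boldsymbol{\mu}}$ is $\widehat{\boldsymbol{\mu}}^S_{\widehat{\mathscr{A}}}(g,s)=\inf\{\widehat{\mu}_s(X\setminus E)\colon \widehat{\mathsf{A}}_s(g|E)\le s,\ E\in\mathcal{E}\}$ for $s\ge0$. *)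

From HB Require Import structures.
From mathcomp Require Import all_boot all_order all_algebra.
From mathcomp Require Import all_classical all_reals.
From mathcomp Require Import ereal topology normedtype numfun measure lebesgue_measure.
Set Implicit Arguments. Unset Strict Implicit. Unset Printing Implicit Defensive.
Import Order.TTheory GRing.Theory Num.Theory.
Local Open Scope classical_set_scope.
Local Open Scope ring_scope.

Section Defs.
Context {R : realType} {d : measure_display} {T : measurableType d}.

Definition pos_part (a : R) : R := Num.max a 0.

Definition Fclass (f : T -> R) : Prop :=
  measurable_fun setT f /\ (forall x, 0 <= f x) /\ (exists M : R, forall x, f x <= M).

Definition monotone_measure (mu : set T -> \bar R) : Prop :=
  [/\ (forall B C, measurable B -> measurable C -> B `<=` C -> (mu B <= mu C)%E),
      mu set0 = 0%E & (0 < mu setT)%E].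

Definition paving (P : set (set T)) : Prop := P `<=` measurable /\ P set0.

Definition CAO (E : set T) (A : (T -> R) -> \bar R) : Prop :=
  [/\ (forall f, Fclass f -> (0 <= A f)%E),
      (forall f g, Fclass f -> Fclass g -> (forall x, E x -> f x <= g x) ->
         (A f <= A g)%E)
    & A (\1_(~` E)) = 0%E].

Definition CAO_family (P : set (set T)) (A : R -> set T -> (T -> R) -> \bar R) : Prop :=
  forall t, 0 <= t ->
    (forall E, P E -> E <> set0 -> CAO E (A t E)) /\
    (forall f, A t set0 f = +oo%E).

Definition level_measure (P : set (set T)) (mu : R -> set T -> \bar R)
  (A : R -> set T -> (T -> R) -> \bar R) (f : T -> R) (t : R) : \bar R :=
  ereal_sup [set mu t E | E in [set E | P E /\ (t%:E <= A t E f)%E]].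

Definition survival (P : set (set T)) (mu : R -> set T -> \bar R)
  (A : R -> set T -> (T -> R) -> \bar R) (g : T -> R) (s : R) : \bar R :=
  ereal_inf [set mu s (~` E) | E in [set E | P E /\ (A s E g <= s%:E)%E]].

Definition hat_mu (b : R) (mu : R -> set T -> \bar R) (t : R) (E : set T) : \bar R :=
  (mu 0%R setT - mu (pos_part (b - t)) (~` E))%E.

Definition hat_A (b : R) (A : R -> set T -> (T -> R) -> \bar R) (t : R) (E : set T)
  (f : T -> R) : \bar R :=
  if asbool (E = set0) then 0%E
  else (b%:E - A (pos_part (b - t)) E (fun x => pos_part (b - f x)))%E.

End Defs.

From HB Require Import structures.
From mathcomp Require Import all_boot all_order all_algebra.
From mathcomp Require Import all_classical all_reals.
From mathcomp Require Import ereal topology normedtype numfun measure lebesgue_measure.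
Import Order.TTheory GRing.Theory Num.Theory.
Local Open Scope classical_set_scope.
Local Open Scope ring_scope.

(** The reflections [x |-> b - x] on functions and [t |-> b - t] on levels
    turn the hatted objects back into the original ones:
    [(b - (b - f))_+ = f] and [(b - (b - t))_+ = t].  Hence a set [E] is
    admissible for the survival function at level [b - t] exactly when
    [A_t(f|E) >= t], and then [hat mu_(b-t)(X \ E) = mu_0(X) - mu_t(E)].
    The survival function is therefore the infimum of [mu_0(X) - mu_t(E)]
    over the sets defining the level measure, and [x |-> c - x] is an
    order-reversing involution of the extended reals for finite [c]. *)

Section ereal_reflection.
Context {R : realType}.
Local Open Scope ereal_scope.

Lemma lee_EFinB_swap (c : R) (x y : \bar R) :
  (x <= c%:E - y) = (y <= c%:E - x).
Proof. by rewrite !lee_suber_addr // addeC. Qed.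

Lemma EFinBK (c : R) (x : \bar R) : c%:E - (c%:E - x) = x.
Proof. by case: x => [x| |] //=; rewrite -!EFinB subKr. Qed.

Lemma ereal_inf_EFinB (c : R) (S : set (\bar R)) :
  ereal_inf [set c%:E - x | x in S] = c%:E - ereal_sup S.
Proof.
apply/le_anti/andP; split.
- rewrite lee_EFinB_swap; apply/ereal_supP => y Sy.
  by rewrite lee_EFinB_swap; apply: ereal_inf_lbound; exists y.
- apply/ereal_infP => _ [y Sy <-].
  by rewrite lee_EFinB_swap EFinBK; apply: ereal_sup_ubound.
Qed.

End ereal_reflection.

Lemma pos_part_id (R : realType) (a : R) : 0 <= a -> pos_part a = a.
Proof. by move=> a_ge0; apply/max_idPl. Qed.

Section hat_reflection.
Context {R : realType} {d : measure_display} {T : measurableType d}.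
Context {P : set (set T)} {b : R} {mu : R -> set T -> \bar R}.
Context {A : R -> set T -> (T -> R) -> \bar R}.

Lemma hat_mu_setC (t : R) (E : set T) : 0 <= t ->
  hat_mu b mu (b - t) (~` E) = (mu 0 setT - mu t E)%E.
Proof. by move=> t_ge0; rewrite /hat_mu setCK subKr pos_part_id. Qed.

Lemma hat_A_reflect_le {f : T -> R} {t : R} {E : set T} :
  CAO_family P A -> Fclass f -> 0 <= t <= b -> P E ->
  (hat_A b A (b - t) E (fun x => (b - f x)%R) <= (b - t)%:E)%E = (t%:E <= A t E f)%E.
Proof.
move=> A_CAO Ff /andP[t_ge0 t_le_b] PE; have [A_cao A_set0] := A_CAO t t_ge0.
rewrite /hat_A subKr pos_part_id //.
have -> : (fun x => pos_part (b - (b - f x))) = f.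
  by apply/funext => x; rewrite subKr pos_part_id //; case: Ff => _ [].
case: asboolP => [->|E_neq0].
  by rewrite A_set0 leey lee_fin subr_ge0 t_le_b.
have [A_ge0 _ _] := A_cao E PE E_neq0.
move: (A_ge0 f Ff); case: (A t E f) => [r| |] //= _.
  by rewrite -EFinB !lee_fin lerD2l lerN2.
by rewrite leey leNye.
Qed.

End hat_reflection.

Theorem proposition3p23 (R : realType) (d : measure_display) (T : measurableType d)
  (P : set (set T)) (b : R) (mu : R -> set T -> \bar R)
  (A : R -> set T -> (T -> R) -> \bar R) (f : T -> R) (t : R) :
  paving P ->
  0 < b ->
  (forall s, 0 <= s -> monotone_measure (mu s)) ->
  (forall s, 0 <= s -> mu s setT = mu 0%R setT) ->
  (mu 0%R setT < +oo)%E ->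
  CAO_family P A ->
  (forall s E, 0 <= s -> P E -> E <> set0 -> A s E (cst b) = b%:E) ->
  Fclass f ->
  (forall x, f x <= b) ->
  0 <= t <= b ->
  level_measure P mu A f t =
    (mu 0%R setT - survival P (hat_mu b mu) (hat_A b A) (fun x => (b - f x)%R) (b - t)%R)%E.
Proof.
move=> _ _ mu_mon _ mu0_lty A_CAO _ Ff _ t_0b.
have t_ge0 : 0 <= t by case/andP: t_0b.
have [_ _ mu0_gt0] := mu_mon 0 (lexx 0).
have mu0_fin : mu 0 setT \is a fin_num by rewrite ge0_fin_numE ?ltW.
rewrite -(fineK mu0_fin) /survival -[level_measure _ _ _ _ _](EFinBK (fine (mu 0 setT))).
rewrite -ereal_inf_EFinB; congr (_ - ereal_inf _)%E.
apply/seteqP; split => x.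
- move=> [_ [E [PE E_adm] <-] <-]; exists E.
    by split; rewrite // (hat_A_reflect_le A_CAO Ff t_0b PE).
  by rewrite hat_mu_setC // fineK.
- move=> [E [PE E_adm] <-]; exists (mu t E).
    by exists E; split; rewrite // -(hat_A_reflect_le A_CAO Ff t_0b PE).
  by rewrite hat_mu_setC // fineK.
Qed.
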